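(* Let $A$ be a left counital bialgebra. Then $\Delta_T$ is coassociative: $(\mathrm{id}\otimes\Delta_T)\Delta_T=(\Delta_T\otimes\mathrm{id})\Delta_T$ on $Ш(A)$.
   Context: Throughout, $\mathbf{k}$ is a commutative unital ring, all algebras are unital commutative $\mathbf{k}$-algebras, tensor products are over $\mathbf{k}$. A left counital bialgebra $(H,m,\mu,\Delta,\varepsilon)$ is an algebra $H$ with algebra homomorphisms $\Delta:H\to H\otimes H$ (coassociative) and $\varepsilon:H\to\mathbf{k}$ satisfying left counicity $(\varepsilon\otimes\mathrm{id})\Delta=\beta_\ell$, where $\beta_\ell(u)=1\otimes u$; right counicity is not required. For an algebra $A$ with unit $1_A$, $Ш(A)=\bigoplus_{n\ge1}A^{\otimes n}$, $P_r(\mathfrak a)=1_A\otimes\mathfrak a$, and the product $\diamond$ is defined bilinearly on pure tensors $\mathfrak a=a_1\otimes\mathfrak a'\in A^{\otimes m}$, $\mathfrak b=b_1\otimes\mathfrak b'\in A^{\otimes n}$ by: $a_1b_1$ if $m=n=1$; $a_1b_1\otimes\mathfrak b'$ if $m=1,n\ge2$; $a_1b_1\otimes\mathfrak a'$ if $m\ge2,n=1$; $a_1b_1\otimes\big(\mathfrak a'\diamond(1_A\otimes\mathfrak b')+(1_A\otimes\mathfrak a')\diamond\mathfrak b'-1_A\otimes(\mathfrak a'\diamond\mathfrak b')\big)$ if $m,n\ge2$. $Ш(A)\otimes Ш(A)$ has the product $\bullet$, $(x\otimes y)\bullet(x'\otimes y')=(x\diamond x')\otimes(y\diamond y')$, and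 $A\otimes A\subseteq Ш(A)\otimes Ш(A)$ via $A=A^{\otimes1}$. When $A$ is a left counital bialgebra with coproduct $\Delta_A$, the linear map $\Delta_T:Ш(A)\to Ш(A)\otimes Ш(A)$ is defined on pure tensors by induction on tensor length: $\Delta_T(a)=\Delta_A(a)$ for $a\in A$, and for $\mathfrak a'\in A^{\otimes n}$, $\Delta_T(1_A\otimes\mathfrak a')=(\mathrm{id}\otimes P_r)\Delta_T(\mathfrak a')$ and $\Delta_T(a_1\otimes\mathfrak a')=\Delta_A(a_1)\bullet(\mathrm{id}\otimes P_r)\Delta_T(\mathfrak a')$. *)

From HB Require Import structures.
From mathcomp Require Import all_boot all_order all_algebra.
Set Implicit Arguments. Unset Strict Implicit. Unset Printing Implicit Defensive.
Import GRing.Theory.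
Local Open Scope ring_scope.

(* MathComp has no tensor products of modules, so we use the standard
   presentation: an element of a tensor product is a formal k-linear
   combination of pure tensors (a list of (coefficient, pure tensor) pairs),
   and two formal combinations are EQUAL in the tensor product iff they
   agree under every multilinear map into every k-module (universal property
   of the tensor product; taking the target to be the tensor product itself
   shows this is exactly equality in the quotient).

   Pure tensors are encoded as  seq (seq A) : a list of "words", each word
   a1 :: ... :: an standing for a1 (x) ... (x) an in A^{(x)n}.
   - an element of Sha(A) = (+)_{n>=1} A^{(x)n} is a 1-word tensor,
   - Sha(A) (x) Sha(A) = (+)_{m,n} A^{(x)m} (x) A^{(x)n} : 2-word tensors,
   - Sha(A)^{(x)3} : 3-word tensors,
   - A (x) A, A (x) A (x) A : 2 / 3 singleton-word tensors.
   A map is "multilinear" if it is k-linear in every letter of every word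
   (the shape of the word list being fixed), which is the universal property
   of the direct sum over all shapes of these tensor powers of A.
   ------------------------------------------------------------------------ *)

Definition fsum (k : Type) (T : Type) := seq (k * T).

Definition fscale (k : pzRingType) T (c : k) (x : fsum k T) : fsum k T :=
  [seq (c * p.1, p.2) | p <- x].

Definition feval (k : pzRingType) (P : lmodType k) T (f : T -> P)
    (x : fsum k T) : P :=
  \sum_(p <- x) p.1 *: f p.2.

Definition multilinear (k : pzRingType) (A : lmodType k) (P : lmodType k)
    (f : seq (seq A) -> P) : Prop :=
  forall (ws1 ws2 : seq (seq A)) (u v : seq A) (c : k) (a b : A),
    f (ws1 ++ (u ++ (c *: a + b) :: v) :: ws2)
    = c *: f (ws1 ++ (u ++ a :: v) :: ws2) + f (ws1 ++ (u ++ b :: v) :: ws2).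

Definition teq (k : pzRingType) (A : lmodType k)
    (x y : fsum k (seq (seq A))) : Prop :=
  forall (P : lmodType k) (f : seq (seq A) -> P),
    multilinear f -> feval f x = feval f y.

Section Defs.
Variables (k : comPzRingType) (A : comAlgType k).

Notation tens := (fsum k (seq (seq A))).

Definition tw2 (x : fsum k (A * A)) : tens :=
  [seq (p.1, [:: [:: p.2.1]; [:: p.2.2]]) | p <- x].

Definition mulAA (x y : fsum k (A * A)) : fsum k (A * A) :=
  [seq (p.1 * q.1, (p.2.1 * q.2.1, p.2.2 * q.2.2)) | p <- x, q <- y].

Definition coassA_l (D : A -> fsum k (A * A)) (a : A) : tens :=
  flatten [seq [seq (p.1 * q.1, [:: [:: p.2.1]; [:: q.2.1]; [:: q.2.2]])
               | q <- D p.2.2] | p <- D a].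
Definition coassA_r (D : A -> fsum k (A * A)) (a : A) : tens :=
  flatten [seq [seq (p.1 * q.1, [:: [:: q.2.1]; [:: q.2.2]; [:: p.2.2]])
               | q <- D p.2.1] | p <- D a].

Record left_counital_bialgebra (eps : A -> k) (D : A -> fsum k (A * A))
  : Prop := {
  eps_lin : forall (c : k) (a b : A), eps (c *: a + b) = c * eps a + eps b;
  eps_one : eps 1 = 1;
  eps_mul : forall a b : A, eps (a * b) = eps a * eps b;
  D_lin : forall (c : k) (a b : A),
      teq (tw2 (D (c *: a + b))) (fscale c (tw2 (D a)) ++ tw2 (D b));
  D_one : teq (tw2 (D 1)) (tw2 [:: (1, (1, 1))]);
  D_mul : forall a b : A, teq (tw2 (D (a * b))) (tw2 (mulAA (D a) (D b)));
  D_coass : forall a : A, teq (coassA_l D a) (coassA_r D a);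
  (* left counicity (eps (x) id) D = beta_l, via k (x) A = A *)
  D_lcounit : forall u : A, \sum_(p <- D u) (p.1 * eps p.2.1) *: p.2.2 = u
}.

Definition prepend (a : A) (x : fsum k (seq A)) : fsum k (seq A) :=
  [seq (p.1, a :: p.2) | p <- x].

(* the product  <>  on pure tensors; the fuel is size a + size b, which
   decreases by one at each recursive call *)
Fixpoint diamond_fuel (n : nat) (a b : seq A) : fsum k (seq A) :=
  match n with
  | 0 => [::]
  | n'.+1 =>
    match a, b with
    | [:: a1], [:: b1] => [:: (1, [:: a1 * b1])]
    | [:: a1], b1 :: b' => [:: (1, a1 * b1 :: b')]
    | a1 :: a', [:: b1] => [:: (1, a1 * b1 :: a')]
    | a1 :: a', b1 :: b' =>
        prepend (a1 * b1)
          (diamond_fuel n' a' (1 :: b') ++ diamond_fuel n' (1 :: a') b'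
           ++ fscale (-1) (prepend 1 (diamond_fuel n' a' b')))
    | _, _ => [::]
    end
  end.

Definition diamond (a b : seq A) : fsum k (seq A) :=
  diamond_fuel (size a + size b) a b.

Definition bullet (x y : tens) : tens :=
  flatten [seq
    match p.2, q.2 with
    | [:: u; v], [:: u'; v'] =>
        [seq (p.1 * q.1 * r.1 * s.1, [:: r.2; s.2])
        | r <- diamond u u', s <- diamond v v']
    | _, _ => [::]
    end | p <- x, q <- y].

Definition idPr (x : tens) : tens :=
  [seq (p.1, match p.2 with
             | [:: u; v] => [:: u; 1 :: v]
             | ws => ws
             end) | p <- x].

Variable D : A -> fsum k (A * A).

Fixpoint DeltaT (w : seq A) : tens :=
  match w with
  | [::] => [::]
  | [:: a] => tw2 (D a)
  | a :: w' => if a == 1 then idPr (DeltaT w')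
               else bullet (tw2 (D a)) (idPr (DeltaT w'))
  end.

Definition DeltaTS (x : fsum k (seq A)) : tens :=
  flatten [seq fscale p.1 (DeltaT p.2) | p <- x].

Definition id_DeltaT (x : tens) : tens :=
  flatten [seq match p.2 with
               | [:: u; v] => [seq (p.1 * q.1, u :: q.2) | q <- DeltaT v]
               | _ => [::]
               end | p <- x].
Definition DeltaT_id (x : tens) : tens :=
  flatten [seq match p.2 with
               | [:: u; v] => [seq (p.1 * q.1, rcons q.2 v) | q <- DeltaT u]
               | _ => [::]
               end | p <- x].

End Defs.

From HB Require Import structures.
From mathcomp Require Import all_boot all_order all_algebra.
Set Implicit Arguments. Unset Strict Implicit. Unset Printing Implicit Defensive.
Import GRing.Theory.
Local Open Scope ring_scope.

(* Since a letter ⋄ a word only multiplies the letter into the first letter of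
   the word, every term of Δ_T(a_1 ⊗ ⋯ ⊗ a_n) has a single letter on the left:
   Δ_T(a_1 ⊗ ⋯ ⊗ a_n) = Σ a_1' ⋯ a_n' ⊗ (a_1'' ⊗ ⋯ ⊗ a_n''), i.e. Δ_A applied
   letterwise with the left factors multiplied together.  Evaluating both sides
   of the claimed identity against a multilinear functional, coassociativity
   follows by induction on the length of the word: the first letter is handled
   by coassociativity of Δ_A, and regrouping the product of left factors uses
   multiplicativity of Δ_A. *)

Section LetterFunctionals.
Variables (k : pzRingType) (A : lmodType k) (P : lmodType k).

Definition letters_functional (n : nat) (H : seq A -> P) (ws : seq (seq A)) : P :=
  if shape ws == nseq n 1%N then H (map (head 0) ws) else 0.

Lemma letters_functional_multilinear n (H : seq A -> P) :
  (forall s1 s2 c a b, (size s1 + size s2).+1 = n ->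
     H (s1 ++ (c *: a + b) :: s2) = c *: H (s1 ++ a :: s2) + H (s1 ++ b :: s2)) ->
  multilinear (letters_functional n H).
Proof.
move=> linH ws1 ws2 u v c a b; rewrite /letters_functional.
have shapeE z z' : shape (ws1 ++ (u ++ z :: v) :: ws2) = shape (ws1 ++ (u ++ z' :: v) :: ws2).
  by rewrite /shape !map_cat /= !size_cat.
rewrite -(shapeE (c *: a + b) a) -(shapeE (c *: a + b) b).
case: ifP => [/eqP shape_ws|_]; last by rewrite scaler0 addr0.
have : size (u ++ (c *: a + b) :: v) \in nseq n 1%N.
  by rewrite -shape_ws /shape map_cat mem_cat mem_head orbT.
rewrite mem_nseq size_cat /= addnS eqSS addn_eq0 !size_eq0 => /andP [_ /andP [/eqP-> /eqP->]].
move/(congr1 size): shape_ws; rewrite size_nseq size_map size_cat /= addnS => size_ws.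
by rewrite !map_cat /=; apply: linH; rewrite !size_map.
Qed.

Definition bilinear_map (h : A -> A -> P) :=
  (forall y c x1 x2, h (c *: x1 + x2) y = c *: h x1 y + h x2 y) /\
  (forall x c y1 y2, h x (c *: y1 + y2) = c *: h x y1 + h x y2).

Definition trilinear_map (h : A -> A -> A -> P) :=
  [/\ (forall y z c x1 x2, h (c *: x1 + x2) y z = c *: h x1 y z + h x2 y z),
      (forall x z c y1 y2, h x (c *: y1 + y2) z = c *: h x y1 z + h x y2 z) &
      (forall x y c z1 z2, h x y (c *: z1 + z2) = c *: h x y z1 + h x y z2)].

Definition functional2 (h : A -> A -> P) :=
  letters_functional 2 (fun s => h (nth 0 s 0) (nth 0 s 1)).

Definition functional3 (h : A -> A -> A -> P) :=
  letters_functional 3 (fun s => h (nth 0 s 0) (nth 0 s 1) (nth 0 s 2)).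

Lemma functional2_multilinear h : bilinear_map h -> multilinear (functional2 h).
Proof.
move=> [h1 h2]; apply: letters_functional_multilinear => s1 s2 c a b.
by case: s1 => [|? [|? ?]]; case: s2 => [|? [|? ?]] => /eqP //= _;
  first [apply: h1 | apply: h2].
Qed.

Lemma functional3_multilinear h : trilinear_map h -> multilinear (functional3 h).
Proof.
move=> [h1 h2 h3]; apply: letters_functional_multilinear => s1 s2 c a b.
by case: s1 => [|? [|? [|? ?]]]; case: s2 => [|? [|? [|? ?]]] => /eqP //= _;
  first [apply: h1 | apply: h2 | apply: h3].
Qed.

Lemma feval_cat (f : seq (seq A) -> P) x y : feval f (x ++ y) = feval f x + feval f y.
Proof. by rewrite /feval big_cat. Qed.

Lemma feval_fscale (f : seq (seq A) -> P) c x : feval f (fscale c x) = c *: feval f x.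
Proof. by rewrite /feval /fscale big_map scaler_sumr; apply: eq_bigr => p _; rewrite scalerA. Qed.

End LetterFunctionals.

Lemma sum_scale_linear (k : comPzRingType) (P : lmodType k) (T : Type)
    (X : seq (k * T)) (G F1 F2 : k * T -> P) c :
  (forall t, G t = c *: F1 t + F2 t) ->
  \sum_(t <- X) t.1 *: G t = c *: \sum_(t <- X) t.1 *: F1 t + \sum_(t <- X) t.1 *: F2 t.
Proof.
move=> GE; rewrite scaler_sumr -big_split; apply: eq_bigr => t _.
by rewrite GE scalerDr !scalerA mulrC.
Qed.

Section CoproductSums.
Variables (k : comPzRingType) (A : comAlgType k) (eps : A -> k) (D : A -> fsum k (A * A)).
Hypothesis bialgA : left_counital_bialgebra eps D.
Variable P : lmodType k.

Local Notation sumD a h := (\sum_(p <- D a) p.1 *: h p.2.1 p.2.2).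

Lemma feval_functional2 (h : A -> A -> P) X :
  feval (functional2 h) (tw2 X) = \sum_(p <- X) p.1 *: h p.2.1 p.2.2.
Proof. by rewrite /feval /tw2 big_map. Qed.

Lemma coprod_sum_linear (h : A -> A -> P) c a b : bilinear_map h ->
  sumD (c *: a + b) h = c *: sumD a h + sumD b h.
Proof.
move=> hbil; have := D_lin bialgA c a b (functional2_multilinear hbil).
by rewrite feval_cat feval_fscale !feval_functional2.
Qed.

Lemma coprod_sum_one (h : A -> A -> P) : bilinear_map h -> sumD 1 h = h 1 1.
Proof.
move=> hbil; have := D_one bialgA (functional2_multilinear hbil).
by rewrite !feval_functional2 big_seq1 scale1r.
Qed.

Lemma coprod_sum_mul (h : A -> A -> P) a b : bilinear_map h ->
  sumD (a * b) h =
  \sum_(p <- D a) p.1 *: \sum_(q <- D b) q.1 *: h (p.2.1 * q.2.1) (p.2.2 * q.2.2).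
Proof.
move=> hbil; have := D_mul bialgA a b (functional2_multilinear hbil).
rewrite !feval_functional2 => ->; rewrite /mulAA big_allpairs_dep /=.
apply: eq_bigr => p _; rewrite scaler_sumr; apply: eq_bigr => q _.
by rewrite scalerA.
Qed.

Lemma coprod_sum_coassoc (h : A -> A -> A -> P) a : trilinear_map h ->
  \sum_(p <- D a) p.1 *: \sum_(q <- D p.2.2) q.1 *: h p.2.1 q.2.1 q.2.2 =
  \sum_(p <- D a) p.1 *: \sum_(q <- D p.2.1) q.1 *: h q.2.1 q.2.2 p.2.2.
Proof.
move=> htri; have := D_coass bialgA a (functional3_multilinear htri).
rewrite /feval /coassA_l /coassA_r !big_flatten !big_map /=.
have nestedE (G : k * (A * A) -> seq (k * (A * A)))
    (T : k * (A * A) -> k * (A * A) -> A * A * A) :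
    \sum_(p <- D a) p.1 *: \sum_(q <- G p) q.1 *: h (T p q).1.1 (T p q).1.2 (T p q).2 =
    \sum_(p <- D a) \sum_(i <- [seq (p.1 * q.1,
        [:: [:: (T p q).1.1]; [:: (T p q).1.2]; [:: (T p q).2]]) | q <- G p])
      i.1 *: functional3 h i.2.
  apply: eq_bigr => p _; rewrite big_map scaler_sumr; apply: eq_bigr => q _.
  by rewrite scalerA.
rewrite (nestedE (fun p => D p.2.2) (fun p q => (p.2.1, q.2.1, q.2.2))) => ->.
by rewrite -(nestedE (fun p => D p.2.1) (fun p q => (q.2.1, q.2.2, p.2.2))).
Qed.

End CoproductSums.

Section LetterwiseCoproduct.
Variables (k : comPzRingType) (A : comAlgType k) (D : A -> fsum k (A * A)).

Fixpoint DeltaTl (w : seq A) : seq (k * (A * seq A)) :=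
  match w with
  | [::] => [::]
  | [:: a] => [seq (p.1, (p.2.1, [:: p.2.2])) | p <- D a]
  | a :: w' =>
      if a == 1 then [seq (q.1, (q.2.1, 1 :: q.2.2)) | q <- DeltaTl w']
      else [seq (p.1 * q.1, (p.2.1 * q.2.1, p.2.2 :: q.2.2)) | p <- D a, q <- DeltaTl w']
  end.

Definition tw_letter (l : seq (k * (A * seq A))) : fsum k (seq (seq A)) :=
  [seq (q.1, [:: [:: q.2.1]; q.2.2]) | q <- l].

Lemma DeltaTl_cons a w : w != [::] -> DeltaTl (a :: w) =
  if a == 1 then [seq (q.1, (q.2.1, 1 :: q.2.2)) | q <- DeltaTl w]
  else [seq (p.1 * q.1, (p.2.1 * q.2.1, p.2.2 :: q.2.2)) | p <- D a, q <- DeltaTl w].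
Proof. by case: w. Qed.

Lemma size_DeltaTl w q : q \in DeltaTl w -> size q.2.2 = size w.
Proof.
elim: w q => [|a w IHw] q //; case: w IHw => [|b w] IHw; first by case/mapP=> p _ ->.
rewrite DeltaTl_cons //; case: (a == 1).
  by case/mapP=> r /IHw sizer ->; rewrite /= sizer.
by case/allpairsP=> -[p r] [_ /IHw sizer ->]; rewrite /= sizer.
Qed.

Lemma diamond_letter (x y : A) (u : seq A) : diamond [:: x] (y :: u) = [:: (1, x * y :: u)].
Proof. by case: u. Qed.

Lemma bullet_tw_letter (X : fsum k (A * A)) l :
  bullet (tw2 X) (idPr (tw_letter l)) =
  tw_letter [seq (p.1 * q.1, (p.2.1 * q.2.1, p.2.2 :: q.2.2)) | p <- X, q <- l].
Proof.
rewrite /bullet /tw2 /idPr /tw_letter; elim: X => [|p X IHX] //=.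
rewrite flatten_cat IHX map_cat; congr cat; rewrite -!map_comp.
elim: l {IHX} => [|q l IHl] //=.
by rewrite !diamond_letter /= IHl !mulr1.
Qed.

Lemma DeltaT_letterwise w : DeltaT D w = tw_letter (DeltaTl w).
Proof.
elim: w => [|a w IHw] //; case: w IHw => [|b w] IHw.
  by rewrite /= /tw2 /tw_letter -map_comp.
rewrite [LHS]/= -/(DeltaT D (b :: w)) DeltaTl_cons // IHw.
case: (a == 1); last exact: bullet_tw_letter.
by rewrite /idPr /tw_letter -!map_comp.
Qed.

End LetterwiseCoproduct.

Section Coassociativity.
Variables (k : comPzRingType) (A : comAlgType k) (eps : A -> k) (D : A -> fsum k (A * A)).
Hypothesis bialgA : left_counital_bialgebra eps D.
Variable P : lmodType k.

Local Notation sumD a h := (\sum_(p <- D a) p.1 *: h p.2.1 p.2.2).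

Definition evalT (g : A -> seq A -> P) (w : seq A) : P :=
  \sum_(q <- DeltaTl D w) q.1 *: g q.2.1 q.2.2.

Definition letter_word_linear (g : A -> seq A -> P) :=
  (forall v c x y, g (c *: x + y) v = c *: g x v + g y v) /\
  (forall x u v c a b,
     g x (u ++ (c *: a + b) :: v) = c *: g x (u ++ a :: v) + g x (u ++ b :: v)).

Lemma evalT_ext g g' w : (forall x v, g x v = g' x v) -> evalT g w = evalT g' w.
Proof. by move=> gE; apply: eq_bigr => q _; rewrite gE. Qed.

Lemma evalT_linear g g1 g2 c w : (forall x v, g x v = c *: g1 x v + g2 x v) ->
  evalT g w = c *: evalT g1 w + evalT g2 w.
Proof. by move=> gE; apply: sum_scale_linear => q; apply: gE. Qed.

Lemma evalT_sum (T : Type) (R : seq (k * T)) G w :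
  evalT (fun x v => \sum_(r <- R) r.1 *: G r.2 x v) w = \sum_(r <- R) r.1 *: evalT (G r.2) w.
Proof.
rewrite /evalT; under eq_bigr do rewrite scaler_sumr.
rewrite exchange_big; apply: eq_bigr => r _; rewrite scaler_sumr; apply: eq_bigr => q _.
by rewrite !scalerA mulrC.
Qed.

Lemma letter_word_linear_shift g y z : letter_word_linear g ->
  letter_word_linear (fun x v => g (y * x) (z :: v)).
Proof.
move=> [g1 g2]; split; first by move=> v c x1 x2; rewrite mulrDr -scalerAr g1.
by move=> x u v c a b; apply: (g2 _ (z :: u)).
Qed.

Lemma evalT_letter g a : evalT g [:: a] = sumD a (fun x y => g x [:: y]).
Proof. by rewrite /evalT big_map. Qed.

Lemma evalT_cons g a w : w != [::] -> letter_word_linear g ->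
  evalT g (a :: w) = sumD a (fun x y => evalT (fun x' v => g (x * x') (y :: v)) w).
Proof.
move=> w_neq0 [g1 g2]; rewrite {1}/evalT DeltaTl_cons //; case: eqP => [->|_].
  rewrite big_map (coprod_sum_one bialgA
    (h := fun x y => evalT (fun x' v => g (x * x') (y :: v)) w)) /=.
    by apply: eq_bigr => q _; rewrite mul1r.
  split=> [y c x1 x2 | x c y1 y2]; apply: evalT_linear => x' v.
    by rewrite mulrDl -scalerAl g1.
  exact: (g2 _ [::]).
rewrite big_allpairs_dep /=; apply: eq_bigr => p _.
by rewrite /evalT scaler_sumr; apply: eq_bigr => q _; rewrite scalerA.
Qed.

Lemma evalT_word_linear u v g c a b : letter_word_linear g ->
  evalT g (u ++ (c *: a + b) :: v) = c *: evalT g (u ++ a :: v) + evalT g (u ++ b :: v).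
Proof.
elim: u g => [|a0 u IHu] g glin /=; last first.
  have neq0 z : u ++ z :: v != [::] by case: u {IHu}.
  rewrite !evalT_cons //; apply: sum_scale_linear => p.
  by apply: IHu; apply: letter_word_linear_shift.
have [g1 g2] := glin.
case: v => [|b0 v].
  rewrite !evalT_letter (coprod_sum_linear bialgA (h := fun x y => g x [:: y])) //.
  by split=> *; [apply: g1 | apply: (g2 _ [::] [::])].
rewrite !evalT_cons //.
rewrite (coprod_sum_linear bialgA
  (h := fun x y => evalT (fun x' v' => g (x * x') (y :: v')) (b0 :: v))) //.
split=> [y c' x1 x2 | x c' y1 y2]; apply: evalT_linear => x' v'.
  by rewrite mulrDl -scalerAl g1.
exact: (g2 _ [::]).
Qed.

Definition letters_word_linear (phi : A -> A -> seq A -> P) :=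
  [/\ (forall y v c x1 x2, phi (c *: x1 + x2) y v = c *: phi x1 y v + phi x2 y v),
      (forall x v c y1 y2, phi x (c *: y1 + y2) v = c *: phi x y1 v + phi x y2 v) &
      (forall x y u v c a b, phi x y (u ++ (c *: a + b) :: v) =
                             c *: phi x y (u ++ a :: v) + phi x y (u ++ b :: v))].

Lemma letters_word_linear_shift phi a1 a2 a3 : letters_word_linear phi ->
  letters_word_linear (fun x y v => phi (a1 * x) (a2 * y) (a3 :: v)).
Proof.
move=> [phi1 phi2 phi3]; split.
- by move=> y v c x1 x2; rewrite mulrDr -scalerAr phi1.
- by move=> x v c y1 y2; rewrite mulrDr -scalerAr phi2.
- by move=> x y u v c a b; apply: (phi3 _ _ (a3 :: u)).
Qed.

(* (id ⊗ Δ_T) Δ_T and (Δ_T ⊗ id) Δ_T, evaluated against x ⊗ y ⊗ v ↦ phi x y v. *)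
Definition evalT_id_DeltaT phi w := evalT (fun x v => evalT (phi x) v) w.
Definition evalT_DeltaT_id phi w := evalT (fun x v => sumD x (fun y z => phi y z v)) w.

Lemma evalT_id_DeltaT_letter phi a : letters_word_linear phi ->
  evalT_id_DeltaT phi [:: a] = evalT_DeltaT_id phi [:: a].
Proof.
move=> [phi1 phi2 phi3]; rewrite /evalT_id_DeltaT /evalT_DeltaT_id !evalT_letter.
under eq_bigr do rewrite evalT_letter.
apply: (coprod_sum_coassoc bialgA (h := fun x y z => phi x y [:: z])).
by split=> *; [apply: phi1 | apply: phi2 | apply: (phi3 _ _ [::] [::])].
Qed.

Lemma evalT_id_DeltaT_cons phi a w : w != [::] -> letters_word_linear phi ->
  evalT_id_DeltaT phi (a :: w) = sumD a (fun x1 y1 => sumD y1 (fun x2 y2 =>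
    evalT_id_DeltaT (fun x y v => phi (x1 * x) (x2 * y) (y2 :: v)) w)).
Proof.
move=> w_neq0 [phi1 phi2 phi3]; rewrite /evalT_id_DeltaT evalT_cons //; last first.
  split=> [v c x1 x2 | x u v c a1 b1]; first by apply: evalT_linear => y v'; apply: phi1.
  by apply: evalT_word_linear; split=> *; [apply: phi2 | apply: phi3].
apply: eq_bigr => p _; congr (_ *: _).
rewrite -(evalT_sum (D p.2.2)
  (fun r x v => evalT (fun y v' => phi (p.2.1 * x) (r.1 * y) (r.2 :: v')) v)).
apply: eq_big_seq => -[c [x v]] /size_DeltaTl /=.
case: v => [/esym/eqP|y0 v0 _]; first by rewrite size_eq0 (negPf w_neq0).
by rewrite evalT_cons.
Qed.

Lemma evalT_DeltaT_id_cons phi a w : w != [::] -> letters_word_linear phi ->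
  evalT_DeltaT_id phi (a :: w) = sumD a (fun x1 y1 =>
    evalT (fun x v => sumD (x1 * x) (fun y z => phi y z (y1 :: v))) w).
Proof.
move=> w_neq0 [phi1 phi2 phi3]; rewrite /evalT_DeltaT_id evalT_cons //; split.
  move=> v c x1 x2; apply: (coprod_sum_linear bialgA (h := fun y z => phi y z v)).
  by split=> *; [apply: phi1 | apply: phi2].
by move=> x u v c a1 b1; apply: sum_scale_linear => t; apply: phi3.
Qed.

Lemma evalT_coassoc w phi : w != [::] -> letters_word_linear phi ->
  evalT_id_DeltaT phi w = evalT_DeltaT_id phi w.
Proof.
elim: w phi => [|a w IHw] phi // _ philin.
case: w IHw => [|b w] IHw; first exact: evalT_id_DeltaT_letter.
set w' := b :: w; have [phi1 phi2 phi3] := philin.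
pose K x1 x2 y2 := evalT (fun x v => sumD x (fun y z => phi (x1 * y) (x2 * z) (y2 :: v))) w'.
rewrite evalT_id_DeltaT_cons // evalT_DeltaT_id_cons //.
transitivity (sumD a (fun x1 y1 => sumD y1 (K x1))).
  apply: eq_bigr => p _; congr (_ *: _); apply: eq_bigr => r _; congr (_ *: _).
  by rewrite IHw //; apply: letters_word_linear_shift.
rewrite (coprod_sum_coassoc bialgA (h := K)); last first.
  split=> *; apply: evalT_linear => x v; apply: sum_scale_linear => t.
  - by rewrite mulrDl -scalerAl phi1.
  - by rewrite mulrDl -scalerAl phi2.
  - exact: (phi3 _ _ [::]).
apply: eq_bigr => p _; congr (_ *: _).
rewrite -(evalT_sum (D p.2.1)
  (fun r x v => sumD x (fun y z => phi (r.1 * y) (r.2 * z) (p.2.2 :: v)))).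
apply: evalT_ext => x v.
by rewrite (coprod_sum_mul bialgA (h := fun y z => phi y z (p.2.2 :: v))).
Qed.

End Coassociativity.

Lemma feval_id_DeltaT (k : comPzRingType) (A : comAlgType k) (D : A -> fsum k (A * A))
    (P : lmodType k) (f : seq (seq A) -> P) X :
  feval f (id_DeltaT D X) = \sum_(q <- X) q.1 *:
    match q.2 with
    | [:: u; v] => feval f [seq (r.1, u :: r.2) | r <- DeltaT D v]
    | _ => 0
    end.
Proof.
rewrite /id_DeltaT /feval big_flatten big_map; apply: eq_bigr => -[c ws] _ /=.
case: ws => [|u [|v [|? ?]]] /=; rewrite ?scaler0 ?big_nil //.
by rewrite !big_map scaler_sumr; apply: eq_bigr => r _; rewrite scalerA.
Qed.

Lemma feval_DeltaT_id (k : comPzRingType) (A : comAlgType k) (D : A -> fsum k (A * A))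
    (P : lmodType k) (f : seq (seq A) -> P) X :
  feval f (DeltaT_id D X) = \sum_(q <- X) q.1 *:
    match q.2 with
    | [:: u; v] => feval f [seq (r.1, rcons r.2 v) | r <- DeltaT D u]
    | _ => 0
    end.
Proof.
rewrite /DeltaT_id /feval big_flatten big_map; apply: eq_bigr => -[c ws] _ /=.
case: ws => [|u [|v [|? ?]]] /=; rewrite ?scaler0 ?big_nil //.
by rewrite !big_map scaler_sumr; apply: eq_bigr => r _; rewrite scalerA.
Qed.

Theorem proposition3p6 (k : comPzRingType) (A : comAlgType k)
    (eps : A -> k) (D : A -> fsum k (A * A)) :
  left_counital_bialgebra eps D ->
  forall x : fsum k (seq A), all (fun p => p.2 != [::]) x ->
    teq (id_DeltaT D (DeltaTS D x)) (DeltaT_id D (DeltaTS D x)).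
Proof.
move=> bialgA x x_words P f flin.
pose phi (a b : A) (v : seq A) := f [:: [:: a]; [:: b]; v].
have philin : letters_word_linear phi.
  split=> [y v | x0 v | x0 y u v] c *.
  - exact: (flin [::] [:: [:: y]; v] [::] [::]).
  - exact: (flin [:: [:: x0]] [:: v] [::] [::]).
  - exact: (flin [:: [:: x0]; [:: y]] [::] u v).
rewrite /DeltaTS feval_id_DeltaT feval_DeltaT_id !big_flatten !big_map.
apply: eq_big_seq => p /(allP x_words) p_word.
rewrite /fscale !big_map DeltaT_letterwise /tw_letter !big_map.
transitivity (p.1 *: evalT_id_DeltaT D phi p.2).
  rewrite /evalT_id_DeltaT /evalT scaler_sumr; apply: eq_bigr => q _ /=.
  by rewrite -scalerA DeltaT_letterwise /feval /tw_letter !big_map.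
rewrite (evalT_coassoc bialgA p_word philin) /evalT_DeltaT_id /evalT scaler_sumr.
by apply: eq_bigr => q _ /=; rewrite -scalerA /feval /tw2 !big_map.
Qed.
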